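(* Let $R$ be a commutative semiring and $\varphi:R\to U$ an m-supervaluation which is tangibly surjective, i.e. $\mathcal T(U)\subset\varphi(R)$. Let $N:=\varphi(R)$ (a submonoid of $U$ containing $\mathcal T(U)\cup\{0\}$), $M:=eU$, and let $\tilde U(N)$ be the unfolding of $U$ along $N$ described below. (i) The map $\tilde\varphi:R\to\tilde U(N)$, $a\mapsto\widetilde{\varphi(a)}$, is a tangible m-supervaluation. (ii) If $\varphi':R\to U'$ is a tangible m-supervaluation dominating $\varphi$, then $\varphi'$ dominates $\tilde\varphi$.
   Context: A supertropical monoid is a commutative monoid $U$ with absorbing $0$, idempotent $e$ with $ex=0\Rightarrow x=0$, and a total order on $M:=eU$ compatible with multiplication, with $0$ least, making $M$ a bipotent semiring (addition $=\max$). $\mathcal T(U):=U\setminus eU$. An m-supervaluation is a map $\varphi:R\to U$ with $\varphi(0)=0$, $\varphi(1)=1$, $\varphi(ab)=\varphi(a)\varphi(b)$, $e\varphi(a+b)\le\max(e\varphi(a),e\varphi(b))$; it is tangible if $\varphi(R)\subset\mathcal T(U)\cup\{0\}$. For m-supervaluations $\varphi:R\to U$, $\psi:R\to V$, $\varphi$ dominates $\psi$ if for all $a,b\in R$: $\varphi(a)=\varphi(b)\Rightarrow\psi(a)=\psi(b)$; $e\varphi(a)\le e\varphi(b)\Rightarrow e\psi(a)\le e\psi(b)$; $\varphi(a)\in eU\Rightarrow\psi(a)\in eV$. Unfolding: let $\tilde N=\{\tilde x:x\in N\}$ be a copy of the monoid $N$ (with $\tilde x\tilde y=\widetilde{xy}$).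 $\tilde U(N)$ is the set $\tilde N\cup M$ with $\tilde N\cap M=\{0\}$ (identifying $\tilde 0=0$), multiplication $\tilde x\cdot\tilde y=\widetilde{xy}$, $\tilde x\cdot y=(ex)y$ for $y\in M$, and the product of $M$ on $M$; its unit is $\tilde 1$, its idempotent is $e=1_M$, with $e\tilde U(N)=M$ carrying the order of $M$. Thus $\mathcal T(\tilde U(N))=\tilde N\setminus\{0\}$, and $\tilde x$ is called the tangible lift of $x\in N$. *)

From mathcomp Require Import all_boot all_algebra.
From Stdlib Require Import ClassicalEpsilon.
Import GRing.Theory.

(* Raw data of a supertropical monoid: carrier, product, unit, zero,
   idempotent e, and an order relation (only meaningful on M = eU). *)
Record ST_data := STData {
  stcar : Type;
  stmul : stcar -> stcar -> stcar;
  stone : stcar;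
  stzero : stcar;
  ste : stcar;
  stle : stcar -> stcar -> Prop }.

Set Implicit Arguments. Unset Strict Implicit. Unset Printing Implicit Defensive.

Section ST.
Variable U : ST_data.
Local Notation "x ** y" := (stmul U x y) (at level 40, left associativity).
Local Notation e := (ste U).
Local Notation O := (stzero U).

Definition inM (x : stcar U) : Prop := exists y, x = e ** y.

Definition tangible (x : stcar U) : Prop := ~ inM x.

Definition is_supertropical : Prop :=
  (forall x y z, x ** (y ** z) = (x ** y) ** z) /\
  (forall x y, x ** y = y ** x) /\
  (forall x, stone U ** x = x) /\
  (forall x, O ** x = O) /\
  e ** e = e /\
  (forall x, e ** x = O -> x = O) /\
  (forall x, inM x -> stle U x x) /\
  (forall x y, inM x -> inM y -> stle U x y -> stle U y x -> x = y) /\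
  (forall x y z, inM x -> inM y -> inM z ->
      stle U x y -> stle U y z -> stle U x z) /\
  (forall x y, inM x -> inM y -> stle U x y \/ stle U y x) /\
  (forall x y z, inM x -> inM y -> inM z ->
      stle U x y -> stle U (x ** z) (y ** z)) /\
  (forall x, inM x -> stle U O x).
End ST.

Definition m_supervaluation (R : comPzSemiRingType) (U : ST_data)
    (phi : R -> stcar U) : Prop :=
  [/\ is_supertropical U,
      phi 0%R = stzero U,
      phi 1%R = stone U,
      (forall a b, phi (a * b)%R = stmul U (phi a) (phi b)) &
      (forall a b, stle U (stmul U (ste U) (phi (a + b)%R)) (stmul U (ste U) (phi a))
                \/ stle U (stmul U (ste U) (phi (a + b)%R)) (stmul U (ste U) (phi b)))].

Definition tangible_m_supervaluation (R : comPzSemiRingType) (U : ST_data)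
    (phi : R -> stcar U) : Prop :=
  m_supervaluation phi /\ (forall a, phi a = stzero U \/ tangible (phi a)).

Definition dominates (R : comPzSemiRingType) (U V : ST_data)
    (phi : R -> stcar U) (psi : R -> stcar V) : Prop :=
  [/\ (forall a b, phi a = phi b -> psi a = psi b),
      (forall a b, stle U (stmul U (ste U) (phi a)) (stmul U (ste U) (phi b)) ->
                   stle V (stmul V (ste V) (psi a)) (stmul V (ste V) (psi b))) &
      (forall a, inM (phi a) -> inM (psi a))].

(* Unfolding of U along a subset N (intended: a submonoid containing
   T(U) u {0}).  Elements: tangible lifts ~x of nonzero x in N, and
   elements of M; ~0 is identified with 0 of M. *)
Section Unfold.
Variable U : ST_data.
Variable N : stcar U -> Prop.
Local Notation "x ** y" := (stmul U x y) (at level 40, left associativity).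
Local Notation e := (ste U).
Local Notation O := (stzero U).

Inductive unfold_car : Type :=
  | UT (x : stcar U) of (N x /\ x <> O)
  | UM (y : stcar U) of inM y.

(* embed an element of U which lies in M (fallback e*z never used
   when z is in M) *)
Definition toM (z : stcar U) : unfold_car :=
  match excluded_middle_informative (inM z) with
  | left h => UM h
  | right _ => @UM (e ** z) (ex_intro _ z erefl)
  end.

(* tangible lift ~x of x in N (with ~0 = 0) *)
Definition tlift (z : stcar U) : unfold_car :=
  match excluded_middle_informative (N z /\ z <> O) with
  | left h => UT h
  | right _ => toM z
  end.

Definition unfold_mul (a b : unfold_car) : unfold_car :=
  match a, b with
  | UT x _, UT y _ => tlift (x ** y)
  | UT x _, UM y _ => toM ((e ** x) ** y)
  | UM x _, UT y _ => toM (x ** (e ** y))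
  | UM x _, UM y _ => toM (x ** y)
  end.

Definition unfold_le (a b : unfold_car) : Prop :=
  match a, b with
  | UM x _, UM y _ => stle U x y
  | _, _ => False
  end.

Definition unfolding : ST_data :=
  @STData unfold_car unfold_mul (tlift (stone U)) (toM O) (toM e) unfold_le.
End Unfold.

(* The unfolding keeps the value of every element and only records whether it is a tangible
   lift: the projection [unfold_val] is multiplicative and a product of tangible lifts is
   tangible exactly when its value is nonzero.  Hence the axioms of a supertropical monoid
   transfer from U, the order living on the common ghost part M.  The lifted map has the
   same values as phi and is tangible away from 0, so it is an m-supervaluation; a tangible
   phi' dominating phi only sends 0 into its ghost part, so it dominates the lift as well. *)
From mathcomp Require Import all_boot all_algebra.
From Stdlib Require Import ProofIrrelevance ClassicalEpsilon Classical.

Set Implicit Arguments. Unset Strict Implicit. Unset Printing Implicit Defensive.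

Section SupertropicalLaws.
Variable U : ST_data.
Hypothesis HU : is_supertropical U.
Local Notation "x ** y" := (stmul U x y) (at level 40, left associativity).
Local Notation e := (ste U).
Local Notation O := (stzero U).

Lemma stmulA x y z : x ** (y ** z) = x ** y ** z. Proof. by case: HU. Qed.
Lemma stmulC x y : x ** y = y ** x. Proof. by case: HU => _ []. Qed.
Lemma stmul1 x : stone U ** x = x. Proof. by case: HU => _ [_ []]. Qed.
Lemma stmul0 x : O ** x = O. Proof. by case: HU => _ [_ [_ []]]. Qed.
Lemma stmulr0 x : x ** O = O. Proof. by rewrite stmulC stmul0. Qed.
Lemma ste_idem : e ** e = e. Proof. by case: HU => _ [_ [_ [_ []]]]. Qed.
Lemma ste_mul_eq0 x : e ** x = O -> x = O.
Proof. by case: HU => _ [_ [_ [_ [_ [/(_ x)]]]]]. Qed.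
Lemma stmul_eK x : e ** (e ** x) = e ** x. Proof. by rewrite stmulA ste_idem. Qed.
Lemma stmulCA_e x y : x ** (e ** y) = e ** (x ** y).
Proof. by rewrite stmulA (stmulC x e) -stmulA. Qed.
Lemma ghost_eK x : inM x -> e ** x = x. Proof. by case=> y ->; rewrite stmul_eK. Qed.

End SupertropicalLaws.

Section Unfolding.
Variable U : ST_data.
Variable N : stcar U -> Prop.
Hypothesis HU : is_supertropical U.
Hypothesis N1 : N (stone U).
Hypothesis Nmul : forall x y, N x -> N y -> N (stmul U x y).
Local Notation "x ** y" := (stmul U x y) (at level 40, left associativity).
Local Notation e := (ste U).
Local Notation O := (stzero U).
Local Notation UN := (unfolding N).

Definition unfold_val (a : unfold_car N) : stcar U :=
  match a with UT x _ => x | UM y _ => y end.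

Definition is_tlift (a : unfold_car N) : bool := if a is UT _ _ then true else false.

Lemma unfold_ext (a b : unfold_car N) :
  unfold_val a = unfold_val b -> (is_tlift a <-> is_tlift b) -> a = b.
Proof.
case: a => [x p|x p]; case: b => [y q|y q] /= exy [ab ba];
  try by [have := ab isT | have := ba isT].
all: by subst y; rewrite (proof_irrelevance _ p q).
Qed.

Lemma ghost_unfold_val (a : unfold_car N) : ~~ is_tlift a -> inM (unfold_val a).
Proof. by case: a. Qed.

Lemma tlift_val_neq0 (a : unfold_car N) : is_tlift a -> unfold_val a <> O.
Proof. by case: a => //= x [_ ?]. Qed.

Lemma unfold_val_toM z : unfold_val (toM N z) = e ** z.
Proof.
by rewrite /toM; case: excluded_middle_informative => //= /(ghost_eK HU).
Qed.

Lemma is_tlift_toM z : ~~ is_tlift (toM N z).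
Proof. by rewrite /toM; case: excluded_middle_informative. Qed.

Lemma unfold_val_tlift z : N z -> unfold_val (tlift N z) = z.
Proof.
move=> Nz; rewrite /tlift; case: excluded_middle_informative => //= Nz'.
have -> : z = O by apply: NNPP => z0; apply: Nz'.
by rewrite unfold_val_toM (stmulr0 HU).
Qed.

Lemma is_tlift_tlift z : N z -> is_tlift (tlift N z) <-> z <> O.
Proof.
move=> Nz; rewrite /tlift; case: excluded_middle_informative => [[_ //]|Nz'].
split=> [|z0]; first by rewrite (negbTE (is_tlift_toM _)).
by case: Nz'.
Qed.

Lemma unfold_val_mul (a b : unfold_car N) :
  unfold_val (unfold_mul a b) = unfold_val a ** unfold_val b.
Proof.
case: a => [x p|x Mx]; case: b => [y q|y My] /=.
- by apply/unfold_val_tlift/Nmul; [case: p | case: q].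
- rewrite unfold_val_toM (stmulA HU) (stmul_eK HU) -(stmulA HU).
  by rewrite -(stmulCA_e HU) (ghost_eK HU).
- by rewrite unfold_val_toM (stmulCA_e HU) (stmul_eK HU) (stmulA HU) (ghost_eK HU).
- by rewrite unfold_val_toM (stmulA HU) (ghost_eK HU).
Qed.

Lemma is_tlift_mul (a b : unfold_car N) : is_tlift (unfold_mul a b) <->
  [/\ is_tlift a, is_tlift b & unfold_val a ** unfold_val b <> O].
Proof.
case: a => [x p|x Mx]; case: b => [y q|y My] /=;
  try by split=> [|[]//]; rewrite (negbTE (is_tlift_toM _)).
rewrite is_tlift_tlift; first by split=> [|[]].
by apply: Nmul; [case: p | case: q].
Qed.

Lemma unfold_mul_ghost (a b : unfold_car N) :
  ~~ is_tlift a -> ~~ is_tlift (unfold_mul a b).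
Proof. by move=> /negP ta; apply/negP => /is_tlift_mul []. Qed.

Lemma unfold_val_e (a : unfold_car N) :
  unfold_val (unfold_mul (toM N e) a) = e ** unfold_val a.
Proof. by rewrite unfold_val_mul unfold_val_toM (ste_idem HU). Qed.

Lemma unfold_inM (a : unfold_car N) : inM (U := UN) a <-> ~~ is_tlift a.
Proof.
split=> [[y ->]|ta]; first exact/unfold_mul_ghost/is_tlift_toM.
exists a; apply: unfold_ext => /=.
  by rewrite unfold_val_e (ghost_eK HU) //; apply: ghost_unfold_val.
by rewrite (negbTE ta) (negbTE (unfold_mul_ghost _ (is_tlift_toM _))).
Qed.

Lemma unfold_leE (a b : unfold_car N) : unfold_le a b <->
  [/\ ~~ is_tlift a, ~~ is_tlift b & stle U (unfold_val a) (unfold_val b)].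
Proof. by case: a => [x p|x p]; case: b => [y q|y q]; split=> // -[]. Qed.

Lemma unfold_mulC (a b : unfold_car N) : unfold_mul a b = unfold_mul b a.
Proof.
apply: unfold_ext; first by rewrite !unfold_val_mul (stmulC HU).
by rewrite !is_tlift_mul (stmulC HU); split=> -[].
Qed.

Lemma unfold_mulA (a b c : unfold_car N) :
  unfold_mul a (unfold_mul b c) = unfold_mul (unfold_mul a b) c.
Proof.
apply: unfold_ext; first by rewrite !unfold_val_mul (stmulA HU).
(* the inner nonvanishing condition follows from the outer one *)
split=> /is_tlift_mul [+ + +]; rewrite !unfold_val_mul.
- move=> ta /is_tlift_mul [tb tc _] abc.
  apply/is_tlift_mul; rewrite unfold_val_mul -(stmulA HU); split=> //.
  by apply/is_tlift_mul; split=> // ab0; apply: abc; rewrite (stmulA HU) ab0 (stmul0 HU).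
- move=> /is_tlift_mul [ta tb _] tc abc.
  apply/is_tlift_mul; rewrite unfold_val_mul (stmulA HU); split=> //.
  by apply/is_tlift_mul; split=> // bc0; apply: abc; rewrite -(stmulA HU) bc0 (stmulr0 HU).
Qed.

Lemma unfold_mul1 (a : unfold_car N) : unfold_mul (tlift N (stone U)) a = a.
Proof.
apply: unfold_ext; first by rewrite unfold_val_mul unfold_val_tlift // (stmul1 HU).
rewrite is_tlift_mul unfold_val_tlift // (stmul1 HU); split=> [[]//|ta].
split=> //; last exact: tlift_val_neq0.
apply/is_tlift_tlift => // e10.
by apply: (tlift_val_neq0 ta); rewrite -(stmul1 HU (unfold_val a)) e10 (stmul0 HU).
Qed.

Lemma unfold_val_zero : unfold_val (toM N O) = O.
Proof. by rewrite unfold_val_toM (stmulr0 HU). Qed.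

Lemma unfold_eq_zero (a : unfold_car N) : unfold_val a = O -> a = toM N O.
Proof.
move=> a0; apply: unfold_ext; first by rewrite a0 unfold_val_zero.
by rewrite (negbTE (is_tlift_toM _)); split=> // /tlift_val_neq0.
Qed.

Lemma unfolding_supertropical : is_supertropical UN.
Proof.
have [_ [_ [_ [_ [_ [_ [le_refl [le_anti [le_trans [le_total [le_mul le0]]]]]]]]]]] := HU.
have val_ghost (a : stcar UN) : inM a -> inM (unfold_val a).
  by move/unfold_inM/ghost_unfold_val.
rewrite /is_supertropical /=.
repeat match goal with |- _ /\ _ => split end.
- exact: unfold_mulA.
- exact: unfold_mulC.
- exact: unfold_mul1.
- by move=> a; apply: unfold_eq_zero; rewrite unfold_val_mul unfold_val_zero (stmul0 HU).
- apply: unfold_ext; first by rewrite unfold_val_e unfold_val_toM !(ste_idem HU).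
  by rewrite (negbTE (is_tlift_toM _)) (negbTE (unfold_mul_ghost _ (is_tlift_toM _))).
- move=> a ea0; apply: unfold_eq_zero; apply: (ste_mul_eq0 HU).
  by rewrite -unfold_val_e ea0 unfold_val_zero.
- by move=> a /[dup] /unfold_inM ta /val_ghost /le_refl aa; apply/unfold_leE; split.
- move=> a b /val_ghost Ma /val_ghost Mb /unfold_leE [ta tb ab] /unfold_leE [_ _ ba].
  by apply: unfold_ext; [apply: le_anti | rewrite (negbTE ta) (negbTE tb)].
- move=> a b c /val_ghost Ma /val_ghost Mb /val_ghost Mc.
  move=> /unfold_leE [ta tb ab] /unfold_leE [_ tc bc].
  by apply/unfold_leE; split; last exact: le_trans ab bc.
- move=> a b /[dup] /unfold_inM ta /val_ghost Ma /[dup] /unfold_inM tb /val_ghost Mb.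
  by have [ab|ba] := le_total _ _ Ma Mb; [left|right]; apply/unfold_leE.
- move=> a b c /[dup] /unfold_inM ta /val_ghost Ma /[dup] /unfold_inM tb /val_ghost Mb.
  move=> /val_ghost Mc /unfold_leE [_ _ ab]; apply/unfold_leE.
  split; [exact: unfold_mul_ghost | exact: unfold_mul_ghost |].
  by rewrite !unfold_val_mul; apply: le_mul.
- move=> a /[dup] /unfold_inM ta /val_ghost Ma; apply/unfold_leE.
  by rewrite unfold_val_zero; split; [exact: is_tlift_toM | | exact: le0].
Qed.

Section TangibleLift.
Variable R : comPzSemiRingType.
Variable phi : R -> stcar U.
Hypothesis phi_sv : m_supervaluation phi.
Hypothesis Nphi : forall a, N (phi a).

Let phit (a : R) : stcar UN := tlift N (phi a).

Lemma unfold_val_phit a : unfold_val (phit a) = phi a.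
Proof. exact: unfold_val_tlift. Qed.

Lemma is_tlift_phit a : is_tlift (phit a) <-> phi a <> O.
Proof. exact: is_tlift_tlift. Qed.

Lemma ghost_le_phitE a b :
  stle UN (stmul UN (ste UN) (phit a)) (stmul UN (ste UN) (phit b)) <->
  stle U (e ** phi a) (e ** phi b).
Proof.
rewrite /= unfold_leE !unfold_val_e !unfold_val_phit !unfold_mul_ghost ?is_tlift_toM //.
by split=> [[]|].
Qed.

Lemma tlift_m_supervaluation : tangible_m_supervaluation phit.
Proof.
have [_ phi0 phi1 phiM phiD] := phi_sv.
split; first split.
- exact: unfolding_supertropical.
- by apply: unfold_eq_zero; rewrite unfold_val_phit phi0.
- by rewrite /phit phi1.
- move=> a b; apply: unfold_ext; first by rewrite unfold_val_mul !unfold_val_phit phiM.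
  rewrite is_tlift_phit is_tlift_mul !unfold_val_phit phiM.
  split=> [ab0|[]//]; split=> //; apply/is_tlift_phit => x0; apply: ab0;
    by rewrite x0 ?(stmul0 HU) ?(stmulr0 HU).
- by move=> a b; rewrite !ghost_le_phitE; apply: phiD.
- move=> a; case ta: (is_tlift (phit a)); first by right => /unfold_inM; rewrite ta.
  left; apply: unfold_eq_zero; rewrite unfold_val_phit.
  by apply: NNPP => /is_tlift_phit; rewrite ta.
Qed.

Lemma dominates_tlift (U' : ST_data) (phi' : R -> stcar U') :
  tangible_m_supervaluation phi' -> dominates phi' phi -> dominates phi' phit.
Proof.
move=> [[_ phi'0 _ _ _] tphi'] [eq_dom le_dom _]; split.
- by move=> a b /eq_dom; rewrite /phit => ->.
- by move=> a b /le_dom /ghost_le_phitE.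
- move=> a Ma; apply/unfold_inM/negP => /is_tlift_phit; apply.
  (* phi' is tangible, so its ghost value phi' a is 0 = phi' 0 *)
  have [a0|//] := tphi' a.
  by have [_ <- _ _ _] := phi_sv; apply: eq_dom; rewrite a0 phi'0.
Qed.

End TangibleLift.
End Unfolding.

Theorem theorem7p10 (R : comPzSemiRingType) (U : ST_data) (phi : R -> stcar U) :
  m_supervaluation phi ->
  (forall x : stcar U, tangible x -> exists a, phi a = x) ->
  let N := fun x : stcar U => exists a, phi a = x in
  let phit := fun a : R => (tlift N (phi a) : stcar (unfolding N)) in
  tangible_m_supervaluation phit /\
  (forall (U' : ST_data) (phi' : R -> stcar U'),
     tangible_m_supervaluation phi' -> dominates phi' phi -> dominates phi' phit).
Proof.
move=> phi_sv _ N phit.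
have [HU _ phi1 phiM _] := phi_sv.
have N1 : N (stone U) by exists 1%R; apply: phi1.
have Nmul x y : N x -> N y -> N (stmul U x y).
  by move=> [a <-] [b <-]; exists (a * b)%R; apply: phiM.
have Nphi a : N (phi a) by exists a.
split; first exact: tlift_m_supervaluation.
by move=> U' phi'; apply: dominates_tlift.
Qed.
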